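(* For all integers $k\geq 1$ and $n\geq 3$ with $(k,n)\neq(1,5)$, $\chi_i(C_{4k}\Box C_n)\leq 6$.
   Context: For a graph $G$, an incidence is a pair $(v,e)$ with $v\in V(G)$, $e\in E(G)$ and $v$ incident with $e$. Two incidences $(v,e)$ and $(w,f)$ are adjacent if $v=w$, or $e=f$, or the edge $vw$ equals $e$ or $f$. An incidence $k$-coloring of $G$ is a map from the set of incidences of $G$ to a set of $k$ colors such that adjacent incidences receive distinct colors; the incidence chromatic number $\chi_i(G)$ is the least such $k$. $C_n$ denotes the cycle on $n$ vertices and $\Box$ the Cartesian product of graphs: $G\Box H$ has vertex set $V(G)\times V(H)$, with $(u_1,v_1)$ adjacent to $(u_2,v_2)$ iff either $u_1=u_2$ and $v_1v_2\in E(H)$, or $v_1=v_2$ and $u_1u_2\in E(G)$. *)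

From mathcomp Require Import all_boot.
Set Implicit Arguments. Unset Strict Implicit. Unset Printing Implicit Defensive.

(* A simple graph is a symmetric irreflexive relation e on a finite type T. *)

Definition cycle_rel (n : nat) : rel 'I_n :=
  fun i j => (nat_of_ord j == i.+1 %% n) || (nat_of_ord i == j.+1 %% n).

Arguments cycle_rel n : clear implicits.

Definition cart_rel (T U : finType) (eG : rel T) (eH : rel U) : rel (T * U) :=
  fun x y => ((x.1 == y.1) && eH x.2 y.2) || ((x.2 == y.2) && eG x.1 y.1).

(* Edges are represented as 2-element vertex sets {x,y} with x ~ y. *)
Definition is_edge (T : finType) (e : rel T) (E : {set T}) : bool :=
  [exists x, exists y, e x y && (E == [set x; y])].

Definition is_incidence (T : finType) (e : rel T) (p : T * {set T}) : bool :=
  is_edge e p.2 && (p.1 \in p.2).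

Definition inc_adj (T : finType) (p q : T * {set T}) : bool :=
  [|| p.1 == q.1, p.2 == q.2, [set p.1; q.1] == p.2 | [set p.1; q.1] == q.2].

Definition incidence_coloring (T : finType) (e : rel T) (k : nat)
  (c : T * {set T} -> 'I_k) : Prop :=
  forall p q, is_incidence e p -> is_incidence e q -> p != q ->
    inc_adj p q -> c p != c q.

(* chi_i(G) <= k  iff  G admits an incidence k-coloring. *)
Definition incidence_colorable (T : finType) (e : rel T) (k : nat) : Prop :=
  exists c : T * {set T} -> 'I_k, incidence_coloring e c.

From mathcomp Require Import all_boot zify.
Set Implicit Arguments. Unset Strict Implicit. Unset Printing Implicit Defensive.

(* Colour the incidence (v, vu) by the arc v -> u.  On the torus C_m [] C_n
   such a colouring amounts to choosing, at every vertex, four distinct colours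
   for its four out-arcs, so that the colour of each arc is absent at its head.
   These choices are read off a finite table: every row and every column gets
   a type, the four colours at (i, j) depend only on the types of row i and
   column j, and the local conditions only involve pairs of adjacent types.
   Rows of C_m then correspond to closed walks of length m in the graph of
   admissible consecutive row types, and similarly for columns.  One table
   has a 4-cycle of row types and two column cycles of lengths 3 and 4 through
   a common type, which gives C_(4k) [] C_(3a+4b), hence every n >= 3 but 5;
   a second table gives C_(4k) [] C_5 for k >= 2. *)

Section ArcColoring.
Variable T : finType.
Variable e : rel T.
Hypotheses (e_sym : symmetric e) (e_irr : irreflexive e).

Definition other_end (p : T * {set T}) : T :=
  odflt p.1 [pick u in p.2 | u != p.1].

Lemma incidenceP p :
  is_incidence e p -> e p.1 (other_end p) /\ p.2 = [set p.1; other_end p].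
Proof.
case: p => v E /andP[/existsP[x /existsP[y /andP[exy /eqP E_xy]]]].
move: E_xy => /= E_xy; subst E; rewrite /other_end /= in_set2 => v_xy.
have xy : x != y by apply: contraTneq exy => ->; rewrite e_irr.
case: pickP => [u /andP[] | no_other] /=.
- rewrite in_set2 => /orP[] /eqP-> uv; case/orP: v_xy => /eqP vE; subst v.
  + by rewrite eqxx in uv.
  + by rewrite e_sym exy setUC.
  + by [].
  + by rewrite eqxx in uv.
- case/orP: v_xy => /eqP vE; subst v.
  + by move: (no_other y); rewrite set22 eq_sym xy.
  + by move: (no_other x); rewrite set21 xy.
Qed.

(* An incidence (v, vu) is identified with the arc v -> u: incidences at the
   same vertex are arcs with the same tail, and the remaining adjacencies are
   exactly the pairs of consecutive arcs a -> b, b -> y (including y = a). *)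
Lemma arc_coloring_incidence_colorable k (col : T -> T -> 'I_k) :
  (forall v u u', e v u -> e v u' -> u != u' -> col v u != col v u') ->
  (forall a b y, e a b -> e b y -> col a b != col b y) ->
  incidence_colorable e k.
Proof.
move=> col_tail col_path; exists (fun p => col p.1 (other_end p)).
move=> [v E] [w F] /incidenceP /= [evu E_vu] /incidenceP /= [ewx F_wx].
move: (other_end (v, E)) (other_end (w, F)) evu ewx E_vu F_wx => u x evu ewx -> -> neq.
have [vw|vw] := eqVneq v w.
  subst w => _; apply: col_tail => //.
  by apply: contraNneq neq => ->.
have wv : w != v by rewrite eq_sym.
rewrite /inc_adj /= (negbTE vw) /= => /or3P[] /eqP vwE.
- have : w \in [set v; u] by rewrite vwE set21.
  rewrite in_set2 (negbTE wv) /= => /eqP wu; subst w.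
  have : x \in [set v; u] by rewrite vwE set22.
  rewrite in_set2 => /orP[] /eqP xv; subst x; last by rewrite e_irr in ewx.
  by apply: col_path => //; rewrite e_sym.
- have : w \in [set v; u] by rewrite -vwE set22.
  rewrite in_set2 (negbTE wv) /= => /eqP wu; subst w.
  exact: col_path.
- have : v \in [set w; x] by rewrite -vwE set21.
  rewrite in_set2 (negbTE vw) /= => /eqP vx; subst x.
  by rewrite eq_sym; apply: col_path.
Qed.

End ArcColoring.

Lemma modn_succ_cases m i : i < m ->
  (i.+1 %% m = i.+1 /\ i.+1 < m) \/ (i.+1 %% m = 0 /\ i.+1 = m).
Proof.
move=> i_lt; case: (ltngtP i.+1 m) => [lt|gt|->]; last by right; rewrite modnn.
- by left; rewrite modn_small.
- lia.
Qed.

Lemma modn_succ_inj m i j : i < m -> j < m -> i.+1 %% m = j.+1 %% m -> i = j.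
Proof.
by move=> /modn_succ_cases[[-> ?]|[-> ?]] /modn_succ_cases[[-> ?]|[-> ?]]; lia.
Qed.

Lemma modn_succ_neq m i : 1 < m -> i < m -> (i == i.+1 %% m) = false.
Proof. by move=> m_gt1 /modn_succ_cases[[-> ?]|[-> ?]]; apply/eqP; lia. Qed.

Lemma cycle_rel_sym n : symmetric (cycle_rel n).
Proof. by move=> i j; rewrite /cycle_rel orbC. Qed.

Lemma cycle_rel_irr n : 1 < n -> irreflexive (cycle_rel n).
Proof. by move=> n_gt1 i; rewrite /cycle_rel modn_succ_neq. Qed.

Lemma cart_rel_sym (T U : finType) (eG : rel T) (eH : rel U) :
  symmetric eG -> symmetric eH -> symmetric (cart_rel eG eH).
Proof.
by move=> eG_sym eH_sym x y; rewrite /cart_rel eG_sym eH_sym !(eq_sym x.1) !(eq_sym x.2).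
Qed.

Lemma cart_rel_irr (T U : finType) (eG : rel T) (eH : rel U) :
  irreflexive eG -> irreflexive eH -> irreflexive (cart_rel eG eH).
Proof. by move=> eG_irr eH_irr x; rewrite /cart_rel eG_irr eH_irr !andbF. Qed.

Definition palette k (s : seq nat) : bool :=
  [&& size s == 4, uniq s & all (fun c => c < k) s].

Lemma eq_inord n i j : i < n.+1 -> j < n.+1 -> (inord i == inord j :> 'I_n.+1) = (i == j).
Proof. by move=> i_lt j_lt; rewrite -val_eqE /= !inordK. Qed.

Section TorusColoring.
Variables m n k : nat.
Hypotheses (m_gt2 : 2 < m) (n_gt2 : 2 < n).
Local Notation torus := (cart_rel (cycle_rel m) (cycle_rel n)).
Implicit Types x y z : 'I_m * 'I_n.

(* The direction of an arc: 0 and 1 step the first coordinate forwards and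
   backwards, 2 and 3 the second one. *)
Definition torus_dir x y : nat :=
  if x.1 == y.1 then (if y.2 == x.2.+1 %% n :> nat then 2 else 3)
  else if y.1 == x.1.+1 %% m :> nat then 0 else 1.

Lemma torus_dir_lt4 x y : torus_dir x y < 4.
Proof. by rewrite /torus_dir; case: ifP => _; case: ifP. Qed.

Lemma torus_dirP x y : torus x y ->
     torus_dir x y = 0 /\ y.1 = x.1.+1 %% m :> nat /\ y.2 = x.2 :> nat
  \/ torus_dir x y = 1 /\ x.1 = y.1.+1 %% m :> nat /\ y.2 = x.2 :> nat
  \/ torus_dir x y = 2 /\ y.1 = x.1 :> nat /\ y.2 = x.2.+1 %% n :> nat
  \/ torus_dir x y = 3 /\ y.1 = x.1 :> nat /\ x.2 = y.2.+1 %% n :> nat.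
Proof.
case: x y => [[a1 ha1] [a2 ha2]] [[b1 hb1] [b2 hb2]].
rewrite /torus_dir /cart_rel /cycle_rel /= -!val_eqE /=.
case/modn_succ_cases: (ha1) => [[-> ?]|[-> ?]];
case/modn_succ_cases: (hb1) => [[-> ?]|[-> ?]];
case/modn_succ_cases: (ha2) => [[-> ?]|[-> ?]];
case/modn_succ_cases: (hb2) => [[-> ?]|[-> ?]];
by do ![case: eqP => ? /=]; try lia.
Qed.

Lemma torus_dir_inj x y z :
  torus x y -> torus x z -> torus_dir x y = torus_dir x z -> y = z.
Proof.
move=> /torus_dirP dy /torus_dirP dz.
case: y z dy dz => [y1 y2] [z1 z2] /=.
move=> [[-> [y1E y2E]]|[[-> [y1E y2E]]|[[-> [y1E y2E]]|[-> [y1E y2E]]]]];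
move=> [[-> [z1E z2E]]|[[-> [z1E z2E]]|[[-> [z1E z2E]]|[-> [z1E z2E]]]]] // _;
congr pair; apply: val_inj => //=; rewrite ?y1E ?y2E ?z1E ?z2E //;
by apply: (@modn_succ_inj _ _ _ (ltn_ord _) (ltn_ord _)); rewrite -?y1E -?y2E.
Qed.

Variable q : nat -> nat -> seq nat.
Local Notation pal x := (q x.1 x.2).
Hypotheses
  (q_palette : forall i j, i < m -> j < n -> palette k.+1 (q i j))
  (q_right : forall i j, i < m -> j < n -> nth 0 (q i j) 0 \notin q (i.+1 %% m) j)
  (q_left : forall i j, i < m -> j < n -> nth 0 (q (i.+1 %% m) j) 1 \notin q i j)
  (q_up : forall i j, i < m -> j < n -> nth 0 (q i j) 2 \notin q i (j.+1 %% n))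
  (q_down : forall i j, i < m -> j < n -> nth 0 (q i (j.+1 %% n)) 3 \notin q i j).

Definition torus_arc_color x y : nat := nth 0 (pal x) (torus_dir x y).

Lemma torus_arc_color_in x y : torus_arc_color x y \in pal x.
Proof.
have /and3P[/eqP size4 _ _] := q_palette (ltn_ord x.1) (ltn_ord x.2).
by rewrite mem_nth // size4 torus_dir_lt4.
Qed.

Lemma torus_arc_color_lt x y : torus_arc_color x y < k.+1.
Proof.
have /and3P[_ _ /allP] := q_palette (ltn_ord x.1) (ltn_ord x.2).
by apply; apply: torus_arc_color_in.
Qed.

Lemma torus_arc_color_fresh x y : torus x y -> torus_arc_color x y \notin pal y.
Proof.
rewrite /torus_arc_color.
case/torus_dirP => [[-> [-> ->]]|[[-> [-> ->]]|[[-> [-> ->]]|[-> [-> ->]]]]].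
- exact: q_right.
- exact: q_left.
- exact: q_up.
- exact: q_down.
Qed.

Lemma torus_colorable : incidence_colorable torus k.+1.
Proof.
apply: (@arc_coloring_incidence_colorable _ _ _ _ _
  (fun x y => inord (torus_arc_color x y))).
- exact: cart_rel_sym (@cycle_rel_sym m) (@cycle_rel_sym n).
- by apply: cart_rel_irr; apply: cycle_rel_irr; lia.
- move=> x y z xy xz yz; rewrite eq_inord ?torus_arc_color_lt //.
  have /and3P[/eqP size4 uniq_x _] := q_palette (ltn_ord x.1) (ltn_ord x.2).
  rewrite /torus_arc_color nth_uniq ?size4 ?torus_dir_lt4 //.
  by apply: contra yz => /eqP /(torus_dir_inj xy xz) ->.
- move=> x y z xy yz; rewrite eq_inord ?torus_arc_color_lt //.
  by apply: contraNneq (torus_arc_color_fresh xy) => ->; apply: torus_arc_color_in.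
Qed.

End TorusColoring.

Lemma cycle_nth (T : Type) (e : rel T) x0 s i : cycle e s -> i < size s ->
  e (nth x0 s i) (nth x0 s (i.+1 %% size s)).
Proof.
case: s => [//|x p] /= /(pathP x0) walk i_lt.
have := walk i; rewrite size_rcons => /(_ i_lt).
rewrite -rcons_cons !nth_rcons /= ltnS (_ : i <= size p) //.
case/modn_succ_cases: i_lt => [[-> lt]|[-> [->]]] /=; first by rewrite ltnS in lt; rewrite lt.
by rewrite ltnn eqxx.
Qed.

Section ClosedWalks.
Variables (T : eqType) (e : rel T).

Definition closed_walk (x : T) (s : seq T) : bool := path e x s && (last x s == x).

Lemma closed_walk_cat x s1 s2 :
  closed_walk x s1 -> closed_walk x s2 -> closed_walk x (s1 ++ s2).
Proof.
rewrite /closed_walk => /andP[p1 /eqP l1] /andP[p2 l2].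
by rewrite cat_path last_cat l1 p1 p2.
Qed.

Lemma closed_walk_cycle x s : closed_walk x s -> cycle e s.
Proof.
case/lastP: s => [//|s y] /andP[walk]; rewrite last_rcons => /eqP y_x.
by rewrite y_x -rot1_cons rot_cycle; rewrite y_x in walk.
Qed.

Definition has_closed_walk (x : T) (m : nat) : Prop :=
  exists2 s, closed_walk x s & size s = m.

Lemma has_closed_walkD x m1 m2 :
  has_closed_walk x m1 -> has_closed_walk x m2 -> has_closed_walk x (m1 + m2).
Proof.
move=> [s1 walk1 <-] [s2 walk2 <-].
by exists (s1 ++ s2); [apply: closed_walk_cat | rewrite size_cat].
Qed.

Lemma has_closed_walkM x a m : has_closed_walk x m -> has_closed_walk x (a * m).
Proof.
move=> walk_m; elim: a => [|a IH]; first by exists [::]; rewrite /closed_walk ?eqxx.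
by rewrite mulSn; apply: has_closed_walkD.
Qed.

End ClosedWalks.

Definition type_edge (E : seq (nat * nat)) : rel nat := fun a b => (a, b) \in E.

Definition type_palette (F : seq (seq (seq nat))) a s : seq nat :=
  nth [::] (nth [::] F a) s.

(* [F] gives, for a row type and a column type, the colours of the four
   out-arcs in the order of [torus_dir]; [ER] and [ES] list the admissible
   pairs of consecutive row types and column types. *)
Definition type_table_ok k F (ER ES : seq (nat * nat)) : bool :=
  let P := type_palette F in
  [&& all (fun a => all (fun s => palette k (P a s)) (unzip1 ES)) (unzip1 ER),
      all (fun ab => all (fun s =>
         (nth 0 (P ab.1 s) 0 \notin P ab.2 s) && (nth 0 (P ab.2 s) 1 \notin P ab.1 s))
         (unzip1 ES)) ER
    & all (fun st => all (fun a =>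
         (nth 0 (P a st.1) 2 \notin P a st.2) && (nth 0 (P a st.2) 3 \notin P a st.1))
         (unzip1 ER)) ES].

Lemma type_table_colorable k F ER ES x y m n :
  type_table_ok k.+1 F ER ES -> 2 < m -> 2 < n ->
  has_closed_walk (type_edge ER) x m -> has_closed_walk (type_edge ES) y n ->
  incidence_colorable (cart_rel (cycle_rel m) (cycle_rel n)) k.+1.
Proof.
case/and3P => /allP palette_ok /allP row_ok /allP col_ok m_gt2 n_gt2.
move=> [rs /closed_walk_cycle rs_cyc size_rs] [ts /closed_walk_cycle ts_cyc size_ts].
subst m n.
have row_edge i : i < size rs -> (nth 0 rs i, nth 0 rs (i.+1 %% size rs)) \in ER.
  exact: cycle_nth rs_cyc.
have col_edge j : j < size ts -> (nth 0 ts j, nth 0 ts (j.+1 %% size ts)) \in ES.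
  exact: cycle_nth ts_cyc.
have row_type i : i < size rs -> nth 0 rs i \in unzip1 ER.
  by move/row_edge/(map_f fst).
have col_type j : j < size ts -> nth 0 ts j \in unzip1 ES.
  by move/col_edge/(map_f fst).
apply: (@torus_colorable _ _ _ m_gt2 n_gt2
  (fun i j => type_palette F (nth 0 rs i) (nth 0 ts j))) => i j i_lt j_lt.
- exact: allP (palette_ok _ (row_type i i_lt)) _ (col_type j j_lt).
- by case/andP: (allP (row_ok _ (row_edge i i_lt)) _ (col_type j j_lt)).
- by case/andP: (allP (row_ok _ (row_edge i i_lt)) _ (col_type j j_lt)).
- by case/andP: (allP (col_ok _ (col_edge j j_lt)) _ (row_type i i_lt)).
- by case/andP: (allP (col_ok _ (col_edge j j_lt)) _ (row_type i i_lt)).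
Qed.

Lemma sum_threes_fours n : 2 < n -> n != 5 -> exists a b, n = a * 3 + b * 4.
Proof.
move=> n_gt2 /eqP n_neq5; have := ltn_pmod n (isT : 0 < 3).
case: (n %% 3) (divn_eq n 3) => [|[|[|r]]] n_eq // _.
- by exists (n %/ 3), 0; lia.
- by exists (n %/ 3 - 1), 1; lia.
- by exists (n %/ 3 - 2), 2; lia.
Qed.

Definition table1 : seq (seq (seq nat)) := [::
  [:: [:: 2; 3; 0; 1]; [:: 3; 2; 1; 4]; [:: 5; 2; 4; 0]; [:: 1; 2; 5; 4]; [:: 2; 1; 3; 0]; [:: 0; 2; 4; 5]];
  [:: [:: 3; 4; 0; 1]; [:: 4; 5; 1; 2]; [:: 4; 3; 2; 0]; [:: 4; 3; 5; 2]; [:: 3; 4; 1; 0]; [:: 4; 3; 2; 5]];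
  [:: [:: 0; 2; 4; 5]; [:: 2; 3; 5; 1]; [:: 2; 1; 3; 0]; [:: 2; 0; 3; 1]; [:: 0; 2; 5; 4]; [:: 2; 0; 1; 3]];
  [:: [:: 4; 1; 2; 5]; [:: 0; 4; 5; 3]; [:: 3; 4; 0; 1]; [:: 3; 4; 1; 0]; [:: 4; 3; 5; 2]; [:: 3; 4; 0; 1]]].
Definition row_edges1 : seq (nat * nat) := [:: (0, 1); (1, 2); (2, 3); (3, 0)].
Definition col_edges1 : seq (nat * nat) :=
  [:: (0, 1); (1, 2); (2, 0); (0, 3); (3, 4); (4, 5); (5, 0)].

Lemma table1_ok : type_table_ok 6 table1 row_edges1 col_edges1.
Proof. by vm_compute. Qed.

Lemma row_walks1 k : has_closed_walk (type_edge row_edges1) 0 (k * 4).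
Proof. by apply: has_closed_walkM; exists [:: 1; 2; 3; 0]. Qed.

Lemma col_walks1 a b : has_closed_walk (type_edge col_edges1) 0 (a * 3 + b * 4).
Proof.
by apply: has_closed_walkD; apply: has_closed_walkM; [exists [:: 1; 2; 0] | exists [:: 3; 4; 5; 0]].
Qed.

Definition table2 : seq (seq (seq nat)) := [::
  [:: [:: 0; 1; 2; 3]; [:: 0; 1; 3; 4]; [:: 1; 0; 4; 2]; [:: 0; 1; 5; 3]; [:: 1; 0; 4; 2]];
  [:: [:: 2; 4; 1; 5]; [:: 4; 2; 5; 3]; [:: 2; 3; 4; 0]; [:: 3; 2; 5; 1]; [:: 2; 3; 0; 4]];
  [:: [:: 1; 0; 4; 3]; [:: 1; 0; 5; 2]; [:: 0; 1; 3; 4]; [:: 1; 0; 2; 5]; [:: 0; 1; 5; 4]];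
  [:: [:: 3; 2; 0; 4]; [:: 2; 3; 4; 5]; [:: 3; 2; 5; 1]; [:: 2; 3; 0; 4]; [:: 3; 2; 1; 5]];
  [:: [:: 0; 1; 2; 4]; [:: 1; 0; 4; 3]; [:: 1; 0; 2; 5]; [:: 0; 1; 3; 4]; [:: 1; 0; 5; 2]];
  [:: [:: 2; 3; 1; 4]; [:: 3; 2; 4; 0]; [:: 2; 3; 0; 5]; [:: 3; 2; 4; 1]; [:: 2; 3; 0; 5]];
  [:: [:: 1; 0; 3; 4]; [:: 0; 1; 4; 2]; [:: 0; 1; 3; 5]; [:: 1; 0; 2; 4]; [:: 0; 1; 5; 3]];
  [:: [:: 4; 5; 0; 2]; [:: 2; 5; 4; 3]; [:: 3; 2; 5; 1]; [:: 2; 3; 0; 4]; [:: 3; 4; 1; 5]];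
  [:: [:: 3; 2; 0; 4]; [:: 2; 3; 4; 1]; [:: 3; 2; 1; 5]; [:: 2; 3; 4; 0]; [:: 3; 2; 1; 5]]].
Definition row_edges2 : seq (nat * nat) :=
  [:: (0, 1); (1, 2); (2, 3); (3, 4); (4, 5); (5, 6); (6, 7); (7, 0); (6, 8); (8, 4)].
Definition col_edges2 : seq (nat * nat) := [:: (0, 1); (1, 2); (2, 3); (3, 4); (4, 0)].

Lemma table2_ok : type_table_ok 6 table2 row_edges2 col_edges2.
Proof. by vm_compute. Qed.

Lemma row_walks2 k : has_closed_walk (type_edge row_edges2) 4 (k * 4 + 8).
Proof.
apply: has_closed_walkD; last by exists [:: 5; 6; 7; 0; 1; 2; 3; 4].
by apply: has_closed_walkM; exists [:: 5; 6; 8; 4].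
Qed.

Lemma col_walk2 : has_closed_walk (type_edge col_edges2) 0 5.
Proof. by exists [:: 1; 2; 3; 4; 0]. Qed.

Theorem lemma2 (k n : nat) :
  1 <= k -> 3 <= n -> (k, n) <> (1, 5) ->
  incidence_colorable (cart_rel (cycle_rel (4 * k)) (cycle_rel n)) 6.
Proof.
move=> k_gt0 n_gt2 kn_neq.
have [n5|n_neq5] := eqVneq n 5.
- have k_gt1 : 1 < k by case: k k_gt0 kn_neq => [|[|k]] //; rewrite n5.
  have -> : 4 * k = (k - 2) * 4 + 8 by lia.
  rewrite n5.
  by apply: type_table_colorable table2_ok _ _ (row_walks2 _) col_walk2; lia.
- have [a [b n_eq]] := sum_threes_fours n_gt2 n_neq5.
  rewrite n_eq mulnC.
  by apply: type_table_colorable table1_ok _ _ (row_walks1 k) (col_walks1 a b); lia.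
Qed.
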